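(* Let $(E,\mathcal{E},\mu)$ be a $\sigma$-finite measure space and let $f:E\to\mathbb{R}$ be $\mathcal{E}/\mathcal{B}(\mathbb{R})$-measurable with $f(x)\ge 0$ for all $x\in E$ and $K:=\int_E f(x)\,\mu(dx)\in(0,\infty)$. Let $\nu$ be the measure on $(E\times\mathbb{R},\mathcal{E}\otimes\mathcal{B}(\mathbb{R}))$ given by $\nu(C)=\iint_{E\times\mathbb{R}}1_C(x,y)\,\mu(dx)\,dy$, and let $\Gamma[f]=\{(x,y)\in E\times\mathbb{R}: 0\le y\le f(x)\}$. Let $N\in\mathbb{N}$ and let $B_1,\dots,B_N\in\mathcal{E}\otimes\mathcal{B}(\mathbb{R})$ with $B:=\bigcup_{i=1}^N B_i$ satisfy: $\nu(B_i)>0$ for all $i$; $\nu(B_i\cap B_j)=0$ for $i\ne j$; $\nu(\Gamma[f]\setminus B)=0$ and $\nu(B)<\infty$. Define $\Psi:[0,1)\to\{1,\dots,N\}$ by $\Psi(u)=\min\{i\in\{1,\dots,N\}: u<\sum_{j=1}^i \nu(B_j)/\nu(B)\}$, set $B_i[f]:=B_i\cap\Gamma[f]$, and define $$\Lambda:=\{(u,v_1,\dots,v_N,w_1,\dots,w_N)\in[0,1)\times E^N\times\mathbb{R}^N : (v_{\Psi(u)},w_{\Psi(u)})\in B_{\Psi(u)}[f]\}.$$ Let $(\Omega,\mathcal{F},P)$ be a probability space carrying real random variables $U,W_1,\dots,W_N$ and $(E,\mathcal{E})$-valued random variables $V_1,\dots,V_N$ such that, for each $i=1,\dots,N$, $(V_i,W_i)$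 and $U$ are independent, $P((V_i,W_i)\in C)=\nu(C\cap B_i)/\nu(B_i)$ for all $C\in\mathcal{E}\otimes\mathcal{B}(\mathbb{R})$, and $U$ is uniformly distributed on $[0,1)$ (i.e. $P(U\in D)=\int_D 1_{[0,1)}(u)\,du$ for $D\in\mathcal{B}(\mathbb{R})$). Let $Z:=(U,V_1,\dots,V_N,W_1,\dots,W_N)$. Then for every $A\in\mathcal{E}$, $$P\big(V_{\Psi(U)}\in A,\ Z\in\Lambda\big)=\frac{1}{\nu(B)}\int_A f(x)\,\mu(dx).$$
   Context: $\mathcal{B}(\mathbb{R})$ denotes the Borel $\sigma$-algebra of $\mathbb{R}$ and $\mathcal{E}\otimes\mathcal{B}(\mathbb{R})$ the product $\sigma$-algebra. $V_{\Psi(U)}$ denotes the random variable $\omega\mapsto V_{\Psi(U(\omega))}(\omega)$ (on the event $U\in[0,1)$, which has probability one). *)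

From HB Require Import structures.
From mathcomp Require Import all_boot all_order all_algebra.
From mathcomp Require Import all_classical all_reals all_analysis.
Set Implicit Arguments. Unset Strict Implicit. Unset Printing Implicit Defensive.
Import Order.TTheory GRing.Theory Num.Theory.
Local Open Scope classical_set_scope.
Local Open Scope ring_scope.

Definition Gamma {E : Type} {R : realType} (f : E -> R) : set (E * R) :=
  [set z | 0 <= z.2 <= f z.1].

(* Psi u = min {i < N | u < sum_{j <= i} r j}  (0-indexed; returns N if no such i).
   Here r j will be nu(B_j)/nu(B). *)
Definition Psi {R : realType} (N : nat) (r : nat -> R) (u : R) : nat :=
  find (fun i => u < \sum_(0 <= j < i.+1) r j) (iota 0 N).

Definition Lambda {E : Type} {R : realType} (N : nat) (r : nat -> R)
  (B : nat -> set (E * R)) (f : E -> R) : set (R * (nat -> E) * (nat -> R)) :=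
  [set z | let: (u, v, w) := z in
     `[0, 1[%classic u /\
     (B (Psi N r u) `&` Gamma f) (v (Psi N r u), w (Psi N r u))].

Definition indep_rv {dO d1 d2} {Omega : measurableType dO}
  {T1 : measurableType d1} {T2 : measurableType d2} {R : realType}
  (P : probability Omega R) (X : Omega -> T1) (Y : Omega -> T2) : Prop :=
  forall (C : set T1) (D : set T2), measurable C -> measurable D ->
    P (X @^-1` C `&` Y @^-1` D) = (P (X @^-1` C) * P (Y @^-1` D))%E.

From HB Require Import structures.
From mathcomp Require Import all_boot all_order all_algebra.
From mathcomp Require Import all_classical all_reals all_analysis.
From mathcomp Require Import measurable_realfun.

(* The event splits according to the value i = Ψ(U): then U lies in the i-th
   strip [S_i, S_(i+1)[ between partial sums of the ν(B_j)/ν(B), of length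
   ν(B_i)/ν(B), and (V_i, W_i) lies in
   C_i = B_i ∩ Γ[f] ∩ (A × ℝ).  By independence the i-th piece has probability
   ν(C_i)/ν(B_i) · ν(B_i)/ν(B) = ν(C_i)/ν(B).  As the B_i overlap only on
   ν-null sets and cover Γ[f] up to a ν-null set, the ν(C_i) add up to
   ν(Γ[f] ∩ (A × ℝ)), which is ∫_A f dμ because the x-section of Γ[f] is
   [0, f x]. *)

Set Implicit Arguments.
Unset Strict Implicit.
Unset Printing Implicit Defensive.
Import Order.TTheory GRing.Theory Num.Theory.
Local Open Scope classical_set_scope.
Local Open Scope ring_scope.

Section content_null_overlap.
Local Open Scope ereal_scope.
Context d (T : ringOfSetsType d) (R : realFieldType).
Variable m : {content set T -> \bar R}.

Lemma measureU_null_overlap (X Y : set T) : measurable X -> measurable Y ->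
  m (X `&` Y) = 0 -> m (X `|` Y) = m X + m Y.
Proof.
move=> mX mY XY0; rewrite -[X `|` Y](setD0 _) -(setDv X) -setUDr.
rewrite measureU //; [|exact: measurableD|by rewrite setDIK].
by rewrite [m Y](measureDI m mY mX) setIC XY0 adde0.
Qed.

Lemma measure_bigcup_null_overlap (F : nat -> set T) n :
  (forall i, (i < n)%N -> measurable (F i)) ->
  (forall i j, (i < n)%N -> (j < n)%N -> i <> j -> m (F i `&` F j) = 0) ->
  m (\bigcup_(i in `I_n) F i) = \sum_(i < n) m (F i).
Proof.
elim: n => [|n IH] mF F0; first by rewrite bigcup_mkord !big_ord0 measure0.
have mF' i : (i < n)%N -> measurable (F i) by move=> ?; apply: mF; exact: ltnW.
rewrite bigcup_mkord big_ord_recr /= big_ord_recr /= -bigcup_mkord -IH; last 2 first.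
- exact: mF'.
- by move=> i j ? ? ?; apply: F0 => //; exact: ltnW.
apply: measureU_null_overlap; [|exact: mF|].
  by rewrite bigcup_mkord; apply: bigsetU_measurable => i _; exact: mF'.
apply/eqP; rewrite -measure_le0 setI_bigcupl bigcup_mkord.
apply: le_trans (content_subadditive m (F := fun i => F i `&` F n) (n := n) _ _ _) _.
- by move=> i ?; apply: measurableI; [exact: mF'|exact: mF].
- by apply: bigsetU_measurable => i _; apply: measurableI; [exact: mF'|exact: mF].
- by [].
rewrite big1 // => i _; apply: F0 (ltnW (ltn_ord i)) (ltnSn n) _.
by apply/eqP; rewrite ltn_eqF.
Qed.

End content_null_overlap.

Section product_measure2_eq1.
Local Open Scope ereal_scope.
Context d1 d2 (T1 : measurableType d1) (T2 : measurableType d2) (R : realType).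
Variables (m1 : {measure set T1 -> \bar R}) (m2 : {sigma_finite_measure set T2 -> \bar R}).
Hypothesis m1_sigma_finite : sigma_finite setT m1.

(* Registering the hypothesis as an instance on an alias of [m1] makes
   [product_measure_unique] applicable. *)
Let m1' : set T1 -> \bar R := m1.
HB.instance Definition _ := Measure.on m1'.
HB.instance Definition _ := Measure_isSigmaFinite.Build _ _ _ m1' m1_sigma_finite.

Lemma product_measure2_eq1 (X : set (T1 * T2)) : measurable X ->
  (m1 \x^ m2) X = (m1 \x m2) X.
Proof.
move=> mX; symmetry.
apply: (product_measure_unique (m1 := m1') (m' := m1' \x^ m2)) mX => A B mA mB.
exact: product_measure2E.
Qed.

End product_measure2_eq1.

Lemma measurable_Gamma (R : realType) d (E : measurableType d) (f : E -> R) :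
  measurable_fun setT f -> measurable (Gamma f).
Proof.
move=> mf; rewrite -[Gamma f]setTI.
apply: (measurable_and (measurable_fun_ler _ _) (measurable_fun_ler _ _)) => //.
exact: measurableT_comp mf measurable_fst.
Qed.

Lemma product_measure1_Gamma (R : realType) d (E : measurableType d)
    (mu : {measure set E -> \bar R}) (f : E -> R) (A : set E) :
  (forall x, 0 <= f x) ->
  ((mu \x lebesgue_measure) (Gamma f `&` A `*` setT) = \int[mu]_(x in A) (f x)%:E)%E.
Proof.
move=> f_ge0; rewrite integral_mkcond /product_measure1; apply: eq_integral => x _.
rewrite /patch /=; case: ifPn => [/set_mem Ax|/negP Ax].
  have -> : xsection (Gamma f `&` A `*` setT) x = `[0, f x]%classic.
    by apply/seteqP; split => y; rewrite /xsection /= inE /Gamma /= in_itv //=; case.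
  rewrite lebesgue_measure_itv /= lte_fin oppr0 adde0; case: ltP => // fx_le0.
  by congr EFin; apply/esym/le_anti; rewrite fx_le0 f_ge0.
have -> : xsection (Gamma f `&` A `*` setT) x = set0.
  by apply/seteqP; split => y //; rewrite /xsection /= inE => -[_ [/mem_set/Ax]].
by rewrite measure0.
Qed.

Section Psi_strips.
Variables (R : realType) (N : nat) (r : nat -> R).
Hypothesis r_ge0 : forall j, 0 <= r j.

Definition strip i : set R := `[series r i, series r i.+1[%classic.

Let series_r0 : series r 0 = 0.
Proof. by rewrite /series /= big_geq. Qed.

Lemma le_series m n : (m <= n)%N -> series r m <= series r n.
Proof. by move: m n; apply/nondecreasing_seqP => k; rewrite seriesSr lerDl. Qed.

Lemma strip_sub i : (i < N)%N -> strip i `<=` `[0, series r N[%classic.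
Proof.
move=> iN u; rewrite /strip /= !in_itv /= => /andP[iu ui].
by rewrite (le_trans _ iu) ?(lt_le_trans ui) ?le_series // -series_r0 le_series.
Qed.

Lemma strip_disjoint i j : i <> j -> strip i `&` strip j = set0.
Proof.
have disj m n : (m < n)%N -> strip m `&` strip n = set0.
  move=> mn; apply/seteqP; split => // u [].
  rewrite /strip /= !in_itv /= => /andP[_ um] /andP[nu _].
  by have := lt_le_trans um (le_trans (le_series mn) nu); rewrite ltxx.
by move=> /eqP; rewrite neq_ltn => /orP[/disj|/disj]; rewrite // setIC.
Qed.

Lemma lebesgue_measure_strip i : lebesgue_measure (strip i) = (r i)%:E.
Proof.
rewrite lebesgue_measure_itv /= lte_fin seriesSr ltrDl.
have [ri_gt0|] := ltP 0 (r i); first by rewrite -EFinD addrAC subrr add0r.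
by rewrite le_eqVlt ltNge r_ge0 orbF => /eqP ->.
Qed.

Lemma Psi_strip u : 0 <= u < series r N -> (Psi N r u < N)%N /\ strip (Psi N r u) u.
Proof.
move=> /andP[u_ge0 uN]; have N_gt0 : (0 < N)%N.
  by rewrite lt0n; apply: contraTneq uN => ->; rewrite series_r0 -leNgt.
pose p i := u < series r i.+1.
have -> : Psi N r u = find p (iota 0 N) by [].
have hasp : has p (iota 0 N).
  by apply/hasP; exists N.-1; [rewrite mem_iota add0n ltn_predL|rewrite /p prednK].
have PsiN : (find p (iota 0 N) < N)%N.
  by rewrite -[X in (_ < X)%N](size_iota 0 N) -has_find.
split => //; rewrite /strip /= in_itv /=; apply/andP; split; last first.
  by have := nth_find 0%N hasp; rewrite nth_iota // add0n.
case E : (find p (iota 0 N)) => [|k]; first by rewrite series_r0.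
have kN : (k < N)%N by rewrite E in PsiN; exact: ltnW.
have := @before_find _ 0%N p (iota 0 N) k; rewrite E ltnSn nth_iota // add0n.
by move=> /(_ isT) /negbT; rewrite -leNgt.
Qed.

Lemma Psi_eq u i : (i < N)%N -> strip i u -> Psi N r u = i.
Proof.
move=> iN ui; have /Psi_strip[_ uPsi] : 0 <= u < series r N.
  by have := strip_sub iN ui; rewrite /= in_itv.
have [//|/eqP PsiNi] := eqVneq (Psi N r u) i.
by have : set0 u by rewrite -(strip_disjoint PsiNi).
Qed.

Lemma Psi_event (Omega E : Type) (U : Omega -> R) (V : nat -> Omega -> E)
    (W : nat -> Omega -> R) (B : nat -> set (E * R)) (f : E -> R) (A : set E) :
  series r N = 1 ->
  [set w | A (V (Psi N r (U w)) w) /\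
           Lambda N r B f (U w, fun i => V i w, fun i => W i w)] =
  \bigcup_(i in `I_N) ((fun w => (V i w, W i w)) @^-1` (Gamma f `&` A `*` setT `&` B i)
                       `&` U @^-1` strip i).
Proof.
move=> rN1; apply/seteqP; split => w /=.
  move=> [Aw [u01 [BPsi GPsi]]].
  have /Psi_strip[PsiN uPsi] : 0 <= U w < series r N.
    by rewrite rN1; move: u01; rewrite /= in_itv.
  by exists (Psi N r (U w)).
move=> [i iN [[[Gi [Ai _]] Bi] ui]]; rewrite (Psi_eq iN ui).
by split => //; split => //; rewrite -rN1; exact: (strip_sub iN).
Qed.

End Psi_strips.

Section nu_partition.
Local Open Scope ereal_scope.
Context (R : realType) d (E : measurableType d) (mu : {measure set E -> \bar R}).
Hypothesis mu_sigma_finite : sigma_finite setT mu.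
Variables (f : E -> R) (N : nat) (B : nat -> set (E * R)).
Hypotheses (mf : measurable_fun setT f) (f_ge0 : forall x, (0 <= f x)%R).
Let nu := mu \x^ lebesgue_measure.
Let BU := \bigcup_(i in `I_N) B i.
Hypotheses (mB : forall i, (i < N)%N -> measurable (B i))
  (nuBB : forall i j, (i < N)%N -> (j < N)%N -> i <> j -> nu (B i `&` B j) = 0)
  (nu_GammaDBU : nu (Gamma f `\` BU) = 0).

(* [nu] carries no measure structure ([mu] is sigma-finite only by hypothesis),
   so the measure lemmas are applied to [pm]. *)
Let pm : {measure set _ -> \bar R} := mu \x lebesgue_measure.

Let nuE X : measurable X -> nu X = pm X.
Proof. exact: product_measure2_eq1. Qed.

Let pm_null X : measurable X -> nu X = 0 -> pm X = 0.
Proof. by move=> mX <-; apply/esym/nuE. Qed.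

Let le_nu X Y : measurable X -> measurable Y -> X `<=` Y -> nu X <= nu Y.
Proof. by move=> mX mY XY; rewrite !nuE //; apply: le_measure; rewrite ?inE. Qed.

Let mBU : measurable BU.
Proof. by rewrite /BU bigcup_mkord; apply: bigsetU_measurable => i _; exact: mB. Qed.

Lemma measurable_Gamma_cell A i : measurable A -> (i < N)%N ->
  measurable (Gamma f `&` A `*` setT `&` B i).
Proof.
move=> mA iN; apply: measurableI; last exact: mB.
by apply: measurableI; [exact: measurable_Gamma|exact: measurableX].
Qed.

Lemma nu_bigcup : nu BU = \sum_(i < N) nu (B i).
Proof.
rewrite nuE // /BU measure_bigcup_null_overlap.
- by apply: eq_bigr => i _; rewrite nuE //; exact: mB.
- exact: mB.
- move=> i j iN jN ij; rewrite -(nuBB iN jN ij) nuE //.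
  by apply: measurableI; exact: mB.
Qed.

Lemma nu_Gamma_partition A : measurable A ->
  \sum_(i < N) nu (Gamma f `&` A `*` setT `&` B i) = \int[mu]_(x in A) (f x)%:E.
Proof.
move=> mA; set G := Gamma f `&` A `*` setT.
have mGamma := measurable_Gamma mf.
have mG : measurable G by apply: measurableI => //; exact: measurableX.
have GDBU0 : pm (G `\` BU) = 0.
  apply: (subset_measure0 (mu := pm) (measurableD mG mBU) (measurableD mGamma mBU)).
    by move=> z [[]].
  by apply: pm_null => //; exact: measurableD.
transitivity (pm G); last exact: product_measure1_Gamma.
rewrite (measureDI pm mG mBU) [X in X + _](_ : _ = 0) ?add0e; last exact: GDBU0.
rewrite setI_bigcupr measure_bigcup_null_overlap //.
- by apply: eq_bigr => i _; rewrite nuE //; exact: measurable_Gamma_cell.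
- by move=> i; exact: measurable_Gamma_cell.
move=> i j iN jN ij; have mBij := measurableI _ _ (mB iN) (mB jN).
have mGBij := measurableI _ _ (measurable_Gamma_cell mA iN) (measurable_Gamma_cell mA jN).
apply: (subset_measure0 (mu := pm) mGBij mBij); first by move=> z [[_ ?] [_ ?]].
exact: pm_null (nuBB iN jN ij).
Qed.

Hypotheses (nuB_gt0 : forall i, (i < N)%N -> 0 < nu (B i)) (nuBU_fin : nu BU < +oo).
Let r j := (fine (nu (B j)) / fine (nu BU))%R.

Let nuB_fin i : (i < N)%N -> nu (B i) \is a fin_num.
Proof.
move=> iN; rewrite ge0_fin_numE ?(ltW (nuB_gt0 iN)) //.
by rewrite (le_lt_trans _ nuBU_fin) // le_nu //; [exact: mB|move=> z Bz; exists i].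
Qed.

Lemma fine_nu_bigcup_gt0 : 0 < \int[mu]_x (f x)%:E -> (0 < fine (nu BU))%R.
Proof.
move=> int_gt0; rewrite fine_gt0 // nuBU_fin andbT (lt_le_trans int_gt0) //.
rewrite -(nu_Gamma_partition measurableT) nu_bigcup; apply: lee_sum => i _.
by apply: le_nu; [exact: measurable_Gamma_cell|exact: mB|exact: subIsetr].
Qed.

Lemma ratio_ge0 j : (0 <= r j)%R.
Proof. by rewrite divr_ge0 // fine_ge0 //; apply: integral_ge0 => y _. Qed.

Lemma series_ratio : (0 < fine (nu BU))%R -> series r N = 1%R.
Proof.
move=> nuBU_gt0; rewrite /series /= big_mkord -mulr_suml sum_fine.
  by rewrite -nu_bigcup divff // gt_eqF.
by move=> i _; exact: nuB_fin.
Qed.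

Lemma invf_mul_ratio i : (i < N)%N ->
  ((fine (nu (B i)))^-1 * r i = (fine (nu BU))^-1)%R.
Proof.
move=> iN; rewrite /r mulrA mulVf ?mul1r // gt_eqF // fine_gt0 //.
by rewrite nuB_gt0 // ltey_eq nuB_fin.
Qed.

End nu_partition.

Lemma prob_indep_uniform (R : realType) dO (Omega : measurableType dO)
    dT (T : measurableType dT) (P : probability Omega R) (X : Omega -> T)
    (U : Omega -> R) (C : set T) (I : set R) :
  indep_rv P X U ->
  (forall D : set R, measurable D ->
     P (U @^-1` D) = (\int[lebesgue_measure]_(u in D) (\1_(`[0, 1[ : set R) u)%:E)%E) ->
  measurable C -> measurable I -> I `<=` `[0, 1[ ->
  P (X @^-1` C `&` U @^-1` I) = (P (X @^-1` C) * lebesgue_measure I)%E.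
Proof.
by move=> XU PU mC mI I01; rewrite XU // PU // integral_indic // setIidr.
Qed.

Theorem lemma2p1 (R : realType) (d : measure_display) (E : measurableType d)
  (mu : {measure set E -> \bar R}) (f : E -> R)
  (dO : measure_display) (Omega : measurableType dO) (P : probability Omega R)
  (N : nat) (B : nat -> set (E * R))
  (U : Omega -> R) (V : nat -> Omega -> E) (W : nat -> Omega -> R) :
  sigma_finite setT mu ->
  measurable_fun setT f ->
  (forall x, 0 <= f x) ->
  (0 < \int[mu]_x (f x)%:E)%E ->
  (\int[mu]_x (f x)%:E < +oo)%E ->
  let nu := (mu \x^ (@lebesgue_measure R))%E in
  let BU := \bigcup_(i in `I_N) B i in
  (forall i, (i < N)%N -> measurable (B i)) ->
  (forall i, (i < N)%N -> (0 < nu (B i))%E) ->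
  (forall i j, (i < N)%N -> (j < N)%N -> i <> j -> nu (B i `&` B j) = 0%E) ->
  nu (Gamma f `\` BU) = 0%E ->
  (nu BU < +oo)%E ->
  let r := fun j => fine (nu (B j)) / fine (nu BU) in
  measurable_fun setT U ->
  (forall i, (i < N)%N -> measurable_fun setT (V i)) ->
  (forall i, (i < N)%N -> measurable_fun setT (W i)) ->
  (forall i, (i < N)%N ->
     indep_rv P (fun w => (V i w, W i w)) U) ->
  (forall i, (i < N)%N -> forall C : set (E * R), measurable C ->
     P [set w | C (V i w, W i w)] =
       (nu (C `&` B i) * ((fine (nu (B i)))^-1)%:E)%E) ->
  (forall D : set R, measurable D ->
     P (U @^-1` D) =
       (\int[@lebesgue_measure R]_(u in D) (\1_(`[0%R, 1%R[ : set R) u)%:E)%E) ->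
  let Z := fun w => (U w, fun i => V i w, fun i => W i w) in
  forall A : set E, measurable A ->
    P [set w | A (V (Psi N r (U w)) w) /\ Lambda N r B f (Z w)] =
      (((fine (nu BU))^-1)%:E * \int[mu]_(x in A) (f x)%:E)%E.
Proof.
(* The finiteness of the integral follows from [nu BU < +oo]. *)
move=> mu_sf mf f_ge0 int_gt0 _ nu BU mB nuB_gt0 nuBB nu_GammaDBU nuBU_fin r
  mU mV mW indep PV PU Z A mA.
have nuBU_gt0 := fine_nu_bigcup_gt0 mu_sf mf f_ge0 mB nuBB nu_GammaDBU nuBU_fin int_gt0.
have r_ge0 := ratio_ge0 mu N B.
have series_r := series_ratio mu_sf mB nuBB nuB_gt0 nuBU_fin nuBU_gt0.
pose VW i w := (V i w, W i w); pose C i := Gamma f `&` A `*` setT `&` B i.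
have mC i : (i < N)%N -> measurable (C i) := measurable_Gamma_cell mf mB mA.
have P_cell i : (i < N)%N ->
    P (VW i @^-1` C i `&` U @^-1` strip r i) = (((fine (nu BU))^-1)%:E * nu (C i))%E.
  move=> iN; rewrite prob_indep_uniform //; first last.
  - by rewrite -series_r; exact: strip_sub.
  - exact: measurable_itv.
  - exact: mC.
  - exact: indep.
  rewrite (PV i iN (C i) (mC i iN)) (lebesgue_measure_strip r_ge0 i) -setIA setIid.
  by rewrite -muleA -EFinM (invf_mul_ratio mu_sf mB nuB_gt0 nuBU_fin iN) muleC.
rewrite /Z (Psi_event r_ge0) // measure_bigcup_null_overlap; first last.
- move=> i j iN jN ij.
  by rewrite setIACA -preimage_setI strip_disjoint // preimage_set0 setI0 measure0.
- move=> i iN; apply: measurableI; rewrite -[X in measurable X]setTI.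
    by apply: measurable_fun_pair => //; [exact: mV|exact: mW|exact: mC].
  by apply: mU => //; exact: measurable_itv.
rewrite (eq_bigr (fun i : 'I_N => ((fine (nu BU))^-1)%:E * nu (C i))%E); last first.
  by move=> i _; exact: P_cell.
by rewrite -ge0_sume_distrr ?nu_Gamma_partition // => i _; exact: integral_ge0.
Qed.
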